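(* For every hypergraph with loops $G=(V,E,L)$, the convex set $\mathrm{PP}(G)$ is closed.
   Context: A hypergraph with loops is $G=(V,E,L)$: $V$ a finite node set, $E$ a set of subsets of $V$ of cardinality at least two, $L$ a set of loops $\{i,i\}$, $i\in V$, partitioned as $L=L^-\cup L^+$ (minus/plus loops). $\mathrm{PP}(G):=\mathrm{conv}\{z\in\mathbb{R}^{V\cup E\cup L}: z_{ii}\ge z_i^2\ \forall\{i,i\}\in L^+,\ z_{ii}\le z_i^2\ \forall \{i,i\}\in L^-,\ z_e=\prod_{i\in e}z_i\ \forall e\in E,\ z_i\in[0,1]\ \forall i\in V\}$. *)

From HB Require Import structures.
From mathcomp Require Import all_boot all_order all_algebra.
From mathcomp Require Import all_classical all_reals all_analysis.
Set Implicit Arguments. Unset Strict Implicit. Unset Printing Implicit Defensive.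
Import Order.TTheory GRing.Theory Num.Theory.
Local Open Scope ring_scope.
(* V is a finite type of nodes; E a set of subsets of V of cardinality >= 2;
   a loop {i,i} is identified with its node i, so L^-, L^+ : {set V}. *)
Record hypergraph_loops (V : finType) := HypergraphLoops {
  hedges : {set {set V}};
  lminus : {set V};
  lplus  : {set V};
  hedges_card : forall e, e \in hedges -> (1 < #|e|)%N;
  loops_disjoint : [disjoint lminus & lplus]
}.

Local Open Scope classical_set_scope.

Definition hidx (V : finType) (G : hypergraph_loops V) : Type :=
  (V + ({e : {set V} | e \in hedges G} + {i : V | i \in lminus G :|: lplus G}))%type.

Definition PPset (R : realType) (V : finType) (G : hypergraph_loops V)
  : set (hidx G -> R) :=
  [set z |
     (forall l : {i : V | i \in lminus G :|: lplus G},
        sval l \in lplus G -> z (inr (inr l)) >= (z (inl (sval l))) ^+ 2)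
  /\ (forall l : {i : V | i \in lminus G :|: lplus G},
        sval l \in lminus G -> z (inr (inr l)) <= (z (inl (sval l))) ^+ 2)
  /\ (forall e : {e : {set V} | e \in hedges G},
        z (inr (inl e)) = \prod_(i in sval e) z (inl i))
  /\ (forall i : V, 0 <= z (inl i) <= 1)].

Arguments PPset R {V} G.

Definition conv_hull (R : realType) (I : Type) (S : set (I -> R)) : set (I -> R) :=
  [set z | exists (n : nat) (w : 'I_n -> R) (p : 'I_n -> (I -> R)),
     (forall k, 0 <= w k) /\ \sum_(k < n) w k = 1 /\ (forall k, S (p k)) /\
     z = (fun x => \sum_(k < n) w k * p k x)].

Definition PP (R : realType) (V : finType) (G : hypergraph_loops V)
  : set (hidx G -> R) := conv_hull (PPset R G).
Arguments PP R {V} G.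

From HB Require Import structures.
From mathcomp Require Import all_boot all_order all_algebra.
From mathcomp Require Import all_classical all_reals all_analysis.

Set Implicit Arguments.
Unset Strict Implicit.
Unset Printing Implicit Defensive.
Import numFieldTopology.Exports.
Import Order.TTheory GRing.Theory Num.Theory.
Local Open Scope ring_scope.
Local Open Scope classical_set_scope.

(* By Caratheodory, every point of PP(G) is a convex combination of N = |V|+|E|+|L|+1
   points of the defining set. Each such point is the lift (x, prod_e x, x_i^2) of a
   point x of the cube [0,1]^V plus a vector of the recession cone (zero on V and E,
   nonnegative on L^+, nonpositive on L^-), and the cone is closed under nonnegative
   combinations. Hence PP(G) is the projection, along the compact parameter space of
   N weights and N points of the cube, of a closed relation; projecting along a
   compact factor preserves closedness. *)

Section Caratheodory.
Variables (R : realFieldType) (I : finType).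

Lemma affine_dependence m (p : 'I_m -> I -> R) : (#|I|.+1 < m)%N ->
  exists mu : 'I_m -> R, [/\ exists k, 0 < mu k, \sum_k mu k = 0
                          & forall x, \sum_k mu k * p k x = 0].
Proof.
move=> hm.
pose A : 'M[R]_(m, #|I|.+1) := \matrix_(k, j)
  (if unlift ord_max j is Some j' then p k (enum_val j') else 1).
have /rowV0Pn[v /sub_kermxP vA0 /rV0Pn[k0 vk0]] : kermx A != 0.
  by rewrite kermx_eq0 -row_leq_rank -ltnNge (leq_ltn_trans (rank_leq_col A)).
have v_sum0 : \sum_k v 0 k = 0.
  have /matrixP/(_ 0 ord_max) := vA0; rewrite !mxE => {2}<-.
  by apply: eq_bigr => k _; rewrite mxE unlift_none mulr1.
have v_comb0 x : \sum_k v 0 k * p k x = 0.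
  have /matrixP/(_ 0 (lift ord_max (enum_rank x))) := vA0; rewrite !mxE => {2}<-.
  by apply: eq_bigr => k _; rewrite mxE liftK enum_rankK.
move: vk0; rewrite neq_lt => /orP[vk0_lt0 | vk0_gt0]; last first.
  by exists (v 0); split => //; exists k0.
exists (fun k => - v 0 k); split.
- by exists k0; rewrite oppr_gt0.
- by rewrite sumrN v_sum0 oppr0.
- by move=> x; under eq_bigr do rewrite mulNr; rewrite sumrN v_comb0 oppr0.
Qed.

Variable S : set (I -> R).

Definition convex_comb n (z : I -> R) :=
  exists (w : 'I_n -> R) (p : 'I_n -> I -> R),
    [/\ forall k, 0 <= w k, \sum_k w k = 1, forall k, S (p k)
      & z = fun x => \sum_k w k * p k x].

(* Shift the weights along an affine dependence until one of them vanishes. *)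
Lemma convex_comb_drop m z : (#|I|.+1 < m.+1)%N ->
  convex_comb m.+1 z -> convex_comb m z.
Proof.
move=> hm [w [p [w_ge0 w_sum Sp ->]]].
have [mu [[k1 mu_k1] mu_sum mu_comb]] := affine_dependence p hm.
have [k0 mu_k0 t_min] := @arg_minP _ _ _ k1 (fun k => 0 < mu k)
  (fun k => w k / mu k) mu_k1.
pose t := w k0 / mu k0; pose w' k := w k - t * mu k.
have w'_ge0 k : 0 <= w' k.
  rewrite subr_ge0; have [mu_k | mu_k] := ltP 0 (mu k).
    by rewrite -ler_pdivlMr //; exact: t_min.
  by apply: le_trans (w_ge0 k); rewrite mulr_ge0_le0 // divr_ge0 // ltW.
have w'_k0 : w' k0 = 0 by rewrite /w' /t divfK ?subrr // gt_eqF.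
have w'_sum : \sum_k w' k = 1 by rewrite sumrB -mulr_sumr mu_sum mulr0 subr0.
have w'_comb x : \sum_k w k * p k x = \sum_k w' k * p k x.
  under [RHS]eq_bigr do rewrite mulrBl -mulrA.
  by rewrite sumrB -mulr_sumr mu_comb mulr0 subr0.
exists (fun k => w' (lift k0 k)), (fun k => p (lift k0 k)); split => //.
  by rewrite -w'_sum (bigD1_ord k0) //= w'_k0 add0r.
by apply: funext => x; rewrite w'_comb (bigD1_ord k0) //= w'_k0 mul0r add0r.
Qed.

Lemma convex_comb_widen n m z : (n <= m)%N ->
  convex_comb n z -> convex_comb m z.
Proof.
case: n => [|n] hnm [w [p [w_ge0 w_sum Sp ->]]].
  by move: w_sum; rewrite big_ord0 => /eqP; rewrite eq_sym oner_eq0.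
have sum_widen (F : nat -> R) : (forall k, (n < k)%N -> F k = 0) ->
    \sum_(k < m) F k = \sum_(k < n.+1) F k.
  move=> F0; rewrite (big_ord_widen _ F hnm) [RHS]big_mkcond.
  by apply: eq_bigr => k _; rewrite ltnS; case: (leqP k n) => // /F0.
pose W k := if (k < n.+1)%N then w (inord k) else 0.
have W0 k : (n < k)%N -> W k = 0 by move=> nk; rewrite /W ltnS leqNgt nk.
have W_ord (k : 'I_n.+1) : W k = w k by rewrite /W ltn_ord inord_val.
exists (fun k : 'I_m => W k), (fun k : 'I_m => p (inord k)); split => //.
- by move=> k; rewrite /W; case: ifP.
- by rewrite (sum_widen W W0) -w_sum; apply: eq_bigr => k _; rewrite W_ord.
apply: funext => x; rewrite (sum_widen (fun k => W k * p (inord k) x)).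
  by apply: eq_bigr => k _; rewrite W_ord inord_val.
by move=> k /W0 ->; rewrite mul0r.
Qed.

Lemma caratheodory n z : convex_comb n z -> convex_comb #|I|.+1 z.
Proof.
elim: n => [|n IH] hz; first exact: convex_comb_widen hz.
have [hn | hn] := leqP n.+1 #|I|.+1; first exact: convex_comb_widen hz.
exact/IH/convex_comb_drop.
Qed.

End Caratheodory.

Lemma conv_hullE (R : realType) (I : finType) (S : set (I -> R)) :
  conv_hull S = [set z | exists n, convex_comb S n z].
Proof.
apply/seteqP; split=> z [n [w [p]]].
  by move=> [w_ge0 [w_sum [Sp ->]]]; exists n, w, p.
by move=> [w_ge0 w_sum Sp ->]; exists n, w, p.
Qed.

Lemma continuous_comp_fst {X Y Z : topologicalType} (f : X -> Z) :
  continuous f -> continuous (fun p : X * Y => f p.1).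
Proof.
by move=> f_cont p; apply: continuous_comp; [exact: cvg_fst | exact: f_cont].
Qed.

Lemma continuous_comp_snd {X Y Z : topologicalType} (g : Y -> Z) :
  continuous g -> continuous (fun p : X * Y => g p.2).
Proof.
by move=> g_cont p; apply: continuous_comp; [exact: cvg_snd | exact: g_cont].
Qed.

Lemma closed_proj_compact (X Y : topologicalType) (K : set X) (C : set (X * Y)) :
  compact K -> closed C -> closed [set y | exists2 x, K x & C (x, y)].
Proof.
move=> cK cC y cly.
pose F := filter_from (nbhs y)
  (fun B => [set x | K x /\ exists2 y', B y' & C (x, y')]).
have FF : ProperFilter F.
  apply: filter_from_proper; last first.
    by move=> B /cly[y' [[x Kx Cxy'] By']]; exists x; split => //; exists y'.
  apply: filter_from_filter; first by exists setT; apply: filterT.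
  move=> B1 B2 B1y B2y; exists (B1 `&` B2); first exact: filterI.
  by move=> x [Kx [y' [B1y' B2y'] Cxy']]; split; split => //; exists y'.
have [x [Kx clx]] : K `&` cluster F !=set0.
  by apply: cK => //; exists setT; [apply: filterT | move=> x []].
exists x => //; apply: cC => A [[A1 A2] /= [A1x A2y] A12].
have FA2 : F [set x | K x /\ exists2 y', A2 y' & C (x, y')] by exists A2.
have [x' [[_ [y' A2y' Cx'y']] A1x']] := clx _ _ FA2 A1x.
by exists (x', y'); split => //; exact: A12.
Qed.

Section PP_closed.
Variables (R : realType) (V : finType) (G : hypergraph_loops V).
Local Notation I := (hidx G).

Definition lift_point (x : V -> R) (j : I) : R :=
  match j with
  | inl i => x i
  | inr (inl e) => \prod_(i in sval e) x i
  | inr (inr l) => x (sval l) ^+ 2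
  end.

Definition cone_coord (j : I) : set R :=
  match j with
  | inr (inr l) =>
      if sval l \in lplus G then [set r | 0 <= r] else [set r | r <= 0]
  | _ => [set r | r = 0]
  end.

Definition recession_cone : set (I -> R) :=
  [set d | forall j, cone_coord j (d j)].

Lemma recession_cone_comb n (w : 'I_n -> R) (d : 'I_n -> I -> R) :
  (forall k, 0 <= w k) -> (forall k, recession_cone (d k)) ->
  recession_cone (fun j => \sum_k w k * d k j).
Proof.
move=> w_ge0 d_cone j; have := fun k => d_cone k j.
case: j => [i|[e|l]] /=; last case: ifP => _ dj.
1,2: by move=> dj; rewrite big1 // => k _; rewrite dj mulr0.
- by apply: sumr_ge0 => k _; exact: mulr_ge0 (w_ge0 k) (dj k).
- rewrite /= -oppr_ge0 -sumrN; apply: sumr_ge0 => k _.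
  by rewrite -mulrN mulr_ge0 ?oppr_ge0 ?dj.
Qed.

Lemma PPset_lift_add (x : V -> R) (d : I -> R) :
  (forall i, 0 <= x i <= 1) -> recession_cone d ->
  PPset R G (fun j => lift_point x j + d j).
Proof.
move=> x01 d_cone; have d_node i : d (inl i) = 0 := d_cone (inl i).
split; [|split; [|split]] => /=.
- move=> l l_plus; rewrite d_node addr0 lerDl.
  by have := d_cone (inr (inr l)); rewrite /= l_plus.
- move=> l l_minus; rewrite d_node addr0 gerDl.
  by have := d_cone (inr (inr l)); rewrite /= (disjointFr (loops_disjoint G) l_minus).
- move=> e; rewrite (d_cone (inr (inl e))) addr0.
  by apply: eq_bigr => i _; rewrite d_node addr0.
- by move=> i; rewrite d_node addr0.
Qed.

Lemma PPset_sub_lift (z : I -> R) : PPset R G z ->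
  recession_cone (fun j => z j - lift_point (fun i => z (inl i)) j).
Proof.
move=> [z_plus [z_minus [z_edge _]]] [i|[e|l]] /=; rewrite ?z_edge ?subrr //.
case: ifP => [l_plus | l_nplus] /=; first by rewrite subr_ge0 z_plus.
have := svalP l; rewrite inE l_nplus orbF => l_minus.
by rewrite subr_le0 z_minus.
Qed.

Local Notation N := #|{: I}|.+1.
(* [th (k, None)] is the weight and [th (k, Some i)] the i-th coordinate of the
   k-th point of a convex combination of N lifted points. *)
Local Notation param := ('I_N * option V)%type.
Local Notation space := ({ptws param -> R} * {ptws I -> R})%type.

Definition total_weight (th : param -> R) : R := \sum_(k < N) th (k, None).

Definition mixture (th : param -> R) (j : I) : R :=
  \sum_(k < N) th (k, None) * lift_point (fun i => th (k, Some i)) j.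

Definition unit_box : set {ptws param -> R} := [set th | forall a, `[0, 1] (th a)].

Definition mixture_rel : set space :=
  [set p | total_weight p.1 = 1 /\
           recession_cone (fun j => p.2 j - mixture p.1 j)].

Lemma PPE : PP R G = [set z | exists2 th, unit_box th & mixture_rel (th, z)].
Proof.
rewrite /PP conv_hullE; apply/seteqP; split=> z.
  move=> [n /caratheodory [w [p [w_ge0 w_sum Sp ->]]]].
  pose th (a : param) := if a.2 is Some i then p a.1 (inl i) else w a.1.
  exists th.
    case=> k [i|]; rewrite /= in_itv /th /=.
      by have [_ [_ [_]]] := Sp k.
    by rewrite w_ge0 -w_sum (bigD1 k) //= lerDl sumr_ge0.
  split=> //=.
  have -> : (fun j => \sum_k w k * p k j - mixture th j) =
      fun j => \sum_k w k * (p k j - lift_point (fun i => p k (inl i)) j).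
    by apply: funext => j; rewrite -sumrB; apply: eq_bigr => k _; rewrite mulrBr.
  by apply: recession_cone_comb => // k; exact: PPset_sub_lift.
move=> [th th01 [th_sum th_cone]]; exists N.
exists (fun k => th (k, None)).
exists (fun k j => lift_point (fun i => th (k, Some i)) j + (z j - mixture th j)).
split => //.
- by move=> k; have /andP[] := th01 (k, None).
- move=> k; apply: PPset_lift_add => // i.
  by have := th01 (k, Some i); rewrite /= in_itv.
apply: funext => j; under eq_bigr do rewrite mulrDr.
by rewrite big_split /= -mulr_suml -/(total_weight th) th_sum mul1r addrC subrK.
Qed.

Let proj_cont a : continuous (fun th : {ptws param -> R} => th a).
Proof. exact: proj_continuous. Qed.

Lemma total_weight_continuous : continuous (total_weight : {ptws param -> R} -> R).
Proof.
by apply: continuous_big => [|k _]; [exact: add_continuous | exact: proj_cont].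
Qed.

Lemma mixture_continuous j :
  continuous (fun th : {ptws param -> R} => mixture th j).
Proof.
apply: continuous_big => [|k _]; first exact: add_continuous.
move=> th; apply: continuousM; first exact: proj_cont.
case: j => [i|[e|l]] /=.
- exact: proj_cont.
- by apply: continuous_big => [|i _]; [exact: mul_continuous | exact: proj_cont].
- by apply: continuousM; exact: proj_cont.
Qed.

Lemma closed_mixture_rel : closed mixture_rel.
Proof.
have -> : mixture_rel =
    (fun p : space => total_weight p.1) @^-1` [set x | x = 1] `&`
    \bigcap_j (fun p : space => p.2 j - mixture p.1 j) @^-1` cone_coord j.
  apply/seteqP; split=> p [p_weight p_cone]; split=> // j; last exact: p_cone.
  by move=> _; exact: p_cone.
apply: closedI.
  apply: preimage_closed; last exact: closed_eq.
  move=> p _.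
  exact: (continuous_comp_fst (Y := {ptws I -> R}) total_weight_continuous).
apply: closed_bigI => j _; apply: preimage_closed.
  move=> p _; apply: (@continuousB _ _ _ (fun p : space => p.2 j)).
    have coord_cont : continuous (fun z : {ptws I -> R} => z j).
      exact: proj_continuous.
    exact: (continuous_comp_snd (X := {ptws param -> R}) coord_cont).
  exact: (continuous_comp_fst (Y := {ptws I -> R}) (@mixture_continuous j)).
case: j => [i|[e|l]] /=; try exact: closed_eq.
by case: ifP => _; [exact: closed_ge | exact: closed_le].
Qed.

End PP_closed.

(* R^{V ∪ E ∪ L} carries the product (= Euclidean) topology. *)
Theorem lemma1 (R : realType) (V : finType) (G : hypergraph_loops V) :
  closed (PP R G : set {ptws hidx G -> R}).
Proof.
rewrite PPE; apply: closed_proj_compact; last exact: closed_mixture_rel.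
exact: tychonoff (fun _ => @segment_compact R 0 1).
Qed.
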